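(* Let $A \in \mathbb{C}^{N\times N}$ have an orthonormal basis of eigenvectors $\psi_1,\ldots,\psi_N$ with eigenvalues ordered so that $|\lambda_1|\ge\cdots\ge|\lambda_N|$ and $\lambda_m \neq 0$ for some $1\le m<N$. Let $\Psi_{\le m} = [\psi_1,\ldots,\psi_m]$ and $\Psi_{>m} = [\psi_{m+1},\ldots,\psi_N]$. Let $V \in \mathbb{C}^{N\times m}$ be such that $\Psi_{\le m}^{*}V$ is invertible, let $\Phi\in\mathbb{C}^{m\times m}$ be invertible, let $E \in \mathbb{C}^{N\times m}$, and set $V' = AV\Phi + E$. If $$\frac{\|E\|_2}{|\lambda_m|} < \left(\frac{1}{\kappa_2(\Psi_{\le m}^{*}V\Phi)} - \left|\frac{\lambda_{m+1}}{\lambda_m}\right|\right)\frac{\|\Psi_{\le m}^{*}V\Phi\|_2\,\|\Psi_{>m}^{*}V\Phi\|_2}{\|V\Phi\|_2},$$ then $\Theta(\mathcal{R}(V'),\mathcal{R}(\Psi_{\le m})) < \Theta(\mathcal{R}(V),\mathcal{R}(\Psi_{\le m}))$.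
   Context: $\|\cdot\|_2$ is the spectral norm, $\kappa_2(X) = \sigma_1(X)/\sigma_m(X)$ is the 2-norm condition number of $X\in\mathbb{C}^{m\times m}$, $\mathcal{R}(X)$ is the column space of $X$, and $^{*}$ denotes conjugate transpose. For $X\in\mathbb{C}^{N\times m}$ with $\Psi_{\le m}^{*}X$ invertible, $\Theta(\mathcal{R}(X),\mathcal{R}(\Psi_{\le m}))$ denotes the largest principal angle between $\mathcal{R}(X)$ and $\mathcal{R}(\Psi_{\le m})$, which satisfies $\tan\Theta(\mathcal{R}(X),\mathcal{R}(\Psi_{\le m})) = \sigma_1\big(\Psi_{>m}^{*}X(\Psi_{\le m}^{*}X)^{-1}\big)$, $\sigma_1$ denoting the largest singular value. In the application, $V'$ is the result of one step of inexact subspace iteration: $\Phi$ contains Ritz coefficients and $E$ is the accumulated perturbation (truncation) error. *)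

From HB Require Import structures.
From mathcomp Require Import all_boot all_order all_algebra.
From mathcomp Require Import all_classical all_reals all_analysis.
From mathcomp Require Import complex.
Set Implicit Arguments. Unset Strict Implicit. Unset Printing Implicit Defensive.
Import Order.TTheory GRing.Theory Num.Theory.
Local Open Scope ring_scope.
Local Open Scope classical_set_scope.

Section SpectralDefs.
Variable R : realType.
Local Notation C := R[i].

Definition cabs (z : C) : R := Num.sqrt (complex.Re z ^+ 2 + complex.Im z ^+ 2).

Definition ctrmx p q (X : 'M[C]_(p, q)) : 'M[C]_(q, p) := map_mx (@conjc R) X^T.

Definition vnorm2 n (x : 'cV[C]_n) : R :=
  Num.sqrt (\sum_i (complex.Re (x i 0) ^+ 2 + complex.Im (x i 0) ^+ 2)).

Definition spec_norm p q (X : 'M[C]_(p, q)) : R :=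
  sup [set vnorm2 (X *m x) | x in [set x : 'cV[C]_q | vnorm2 x = 1]].

Definition sigma_min m (X : 'M[C]_m) : R :=
  inf [set vnorm2 (X *m x) | x in [set x : 'cV[C]_m | vnorm2 x = 1]].

Definition kappa2 m (X : 'M[C]_m) : R := spec_norm X / sigma_min X.

(* largest principal angle Theta(R(X), R(Psi_le)), where Psi = [Psi_le Psi_gt]
   is an N x N matrix (N = m + k) whose columns are an orthonormal basis:
   tan Theta = sigma_1 (Psi_gt^* X (Psi_le^* X)^{-1}) when Psi_le^* X is
   invertible; otherwise the subspaces are not in generic position and the
   largest principal angle is pi/2. *)
Definition max_angle m k (Psi : 'M[C]_(m + k)) (X : 'M[C]_(m + k, m)) : R :=
  let Xle := ctrmx (lsubmx Psi) *m X in
  let Xgt := ctrmx (rsubmx Psi) *m X in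
  if Xle \in unitmx then atan (spec_norm (Xgt *m invmx Xle)) else pi / 2.

End SpectralDefs.

From HB Require Import structures.
From mathcomp Require Import all_boot all_order all_algebra.
From mathcomp Require Import all_classical all_reals all_analysis.
From mathcomp Require Import complex.
From mathcomp Require Import ring lra.
Import Order.TTheory GRing.Theory Num.Theory.
Set Implicit Arguments. Unset Strict Implicit. Unset Printing Implicit Defensive.
Local Open Scope ring_scope.

(* Work in the eigenbasis: P := Psi^* is unitary and P A = D P, with D the diagonal
   matrix of eigenvalues.  Split X := P V Phi into its top block Y = Psi_{<=m}^* V Phi and
   its bottom block Z; since Phi cancels, tan Theta(R(V), R(Psi_{<=m})) = t := ||Z Y^-1||,
   so |Z x| <= t |Y x|.  Split P V' = D X + P E likewise into W (top) and U (bottom).  D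
   amplifies the top block by at least |lambda_m| and the bottom block by at most
   |lambda_{m+1}|, and by Cauchy-Schwarz the two blocks e1, e2 of P E x satisfy
   t |e1| + |e2| <= sqrt(t^2 + 1) ||E|| |x|.  Hence |U x| <= t |W x| - delta |x| with
   delta = t (|lambda_m| - |lambda_{m+1}|) sigma_min(Y) - sqrt(t^2 + 1) ||E||.
   Because ||Z|| sqrt(t^2 + 1) <= t ||V Phi||, the hypothesis on ||E|| forces delta > 0;
   then W is invertible and ||U W^-1|| <= t - delta / ||W|| < t. *)

Section ComplexModulus.
Variable R : realType.
Implicit Types (a b z : R[i]) (r : R).

Lemma cabsE z : (cabs z)%:C%C = `|z|.
Proof. by rewrite normc_def. Qed.

Lemma cabs_ge0 z : 0 <= cabs z.
Proof. exact: sqrtr_ge0. Qed.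

Lemma sqr_cabs z : cabs z ^+ 2 = complex.Re z ^+ 2 + complex.Im z ^+ 2.
Proof. by rewrite sqr_sqrtr // addr_ge0 ?sqr_ge0. Qed.

Lemma cabs_real r : cabs r%:C%C = `|r|.
Proof. by rewrite /cabs /= expr0n addr0 sqrtr_sqr. Qed.

Lemma cabs_eq0 z : (cabs z == 0) = (z == 0).
Proof. by rewrite -(inj_eq (@complexI R)) rmorph0 cabsE normr_eq0. Qed.

Lemma cabs_gt0 z : z != 0 -> 0 < cabs z.
Proof. by move=> z0; rewrite lt_neqAle cabs_ge0 andbT eq_sym cabs_eq0. Qed.

Lemma cabsM a b : cabs (a * b) = cabs a * cabs b.
Proof. by apply: (@complexI R); rewrite rmorphM /= !cabsE normrM. Qed.

Lemma cabs_div a b : cabs (a / b) = cabs a / cabs b.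
Proof. by apply: (@complexI R); rewrite fmorph_div /= !cabsE normf_div. Qed.

End ComplexModulus.

Section VectorNorm.
Variable R : realType.
Local Notation C := R[i].
Local Notation Re := complex.Re.
Local Notation Im := complex.Im.

Definition vdot n (x y : 'cV[C]_n) : R :=
  \sum_i (Re (x i 0) * Re (y i 0) + Im (x i 0) * Im (y i 0)).

Variable n : nat.
Implicit Types x y : 'cV[C]_n.

Lemma vnorm2_ge0 x : 0 <= vnorm2 x.
Proof. exact: sqrtr_ge0. Qed.

Lemma sqr_vnorm2 x : vnorm2 x ^+ 2 = \sum_i (Re (x i 0) ^+ 2 + Im (x i 0) ^+ 2).
Proof. by rewrite sqr_sqrtr // sumr_ge0 // => i _; rewrite addr_ge0 ?sqr_ge0. Qed.

Lemma sqr_vnorm2_cabs x : vnorm2 x ^+ 2 = \sum_i cabs (x i 0) ^+ 2.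
Proof. by rewrite sqr_vnorm2; apply: eq_bigr => i _; rewrite sqr_cabs. Qed.

Lemma vnorm2_eq0 x : (vnorm2 x == 0) = (x == 0).
Proof.
rewrite -sqrf_eq0 sqr_vnorm2_cabs psumr_eq0 => [|i _]; last exact: sqr_ge0.
apply/allP/eqP => [x0|-> i _] /=; last by rewrite mxE sqrf_eq0 cabs_eq0.
apply/matrixP => i j; rewrite ord1 mxE; apply/eqP.
by rewrite -cabs_eq0 -sqrf_eq0; exact: x0 (mem_index_enum i).
Qed.

Lemma vnorm2_gt0 x : x != 0 -> 0 < vnorm2 x.
Proof. by move=> x0; rewrite lt_neqAle vnorm2_ge0 andbT eq_sym vnorm2_eq0. Qed.

Lemma vnorm2_0 : vnorm2 (0 : 'cV[C]_n) = 0.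
Proof. by apply/eqP; rewrite vnorm2_eq0. Qed.

Lemma vnorm2_le_entrywise x y :
  (forall i, cabs (x i 0) <= cabs (y i 0)) -> vnorm2 x <= vnorm2 y.
Proof.
move=> xy; rewrite -ler_sqr ?nnegrE ?vnorm2_ge0 // !sqr_vnorm2_cabs.
by apply: ler_sum => i _; rewrite ler_sqr ?nnegrE ?cabs_ge0.
Qed.

Lemma vnorm2Z (c : C) x : vnorm2 (c *: x) = cabs c * vnorm2 x.
Proof.
rewrite -[LHS]ger0_norm ?vnorm2_ge0 // -sqrtr_sqr sqr_vnorm2_cabs.
under eq_bigr do rewrite mxE cabsM exprMn.
by rewrite -mulr_sumr -sqr_vnorm2_cabs -exprMn sqrtr_sqr ger0_norm ?mulr_ge0 ?cabs_ge0 ?vnorm2_ge0.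
Qed.

Lemma vnorm2N x : vnorm2 (- x) = vnorm2 x.
Proof. by rewrite -scaleN1r vnorm2Z -(rmorphN1 (real_complex R)) cabs_real normrN1 mul1r. Qed.

Lemma vnorm2_entry x i : cabs (x i 0) <= vnorm2 x.
Proof.
rewrite -ler_sqr ?nnegrE ?cabs_ge0 ?vnorm2_ge0 // sqr_vnorm2_cabs (bigD1 i) //=.
by rewrite lerDl sumr_ge0 // => j _; apply: sqr_ge0.
Qed.

Lemma sqr_vnorm2D x y : vnorm2 (x + y) ^+ 2 = vnorm2 x ^+ 2 + vnorm2 y ^+ 2 + 2 * vdot x y.
Proof.
rewrite !sqr_vnorm2 /vdot mulr_sumr -!big_split; apply: eq_bigr => i _.
by rewrite mxE /=; ring.
Qed.

Lemma sqr_vnorm2_lincomb (a b : R) x y :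
  vnorm2 (a%:C%C *: x + b%:C%C *: y) ^+ 2
    = a ^+ 2 * vnorm2 x ^+ 2 + b ^+ 2 * vnorm2 y ^+ 2 + 2 * a * b * vdot x y.
Proof.
rewrite !sqr_vnorm2 /vdot !mulr_sumr -!big_split; apply: eq_bigr => i _.
by rewrite !mxE; case: (x i 0) => x1 x2; case: (y i 0) => y1 y2 /=; ring.
Qed.

Lemma vdot_le x y : vdot x y <= vnorm2 x * vnorm2 y.
Proof.
have [->|x0] := eqVneq x 0.
  by rewrite vnorm2_0 mul0r /vdot big1 // => i _; rewrite mxE /= !mul0r addr0.
have [->|y0] := eqVneq y 0.
  by rewrite vnorm2_0 mulr0 /vdot big1 // => i _; rewrite mxE /= !mulr0 addr0.
have ab_gt0 : 0 < vnorm2 x * vnorm2 y by rewrite mulr_gt0 ?vnorm2_gt0.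
have := sqr_ge0 (vnorm2 ((vnorm2 y)%:C%C *: x + (- vnorm2 x)%:C%C *: y)).
rewrite sqr_vnorm2_lincomb => h; rewrite -subr_ge0 -(pmulr_rge0 _ ab_gt0); lra.
Qed.

Lemma vnorm2D x y : vnorm2 (x + y) <= vnorm2 x + vnorm2 y.
Proof.
rewrite -ler_sqr ?nnegrE ?addr_ge0 ?vnorm2_ge0 // sqr_vnorm2D.
have := vdot_le x y; nra.
Qed.

Lemma vnorm2_scale_le x y (c : R) : 0 <= c ->
  (forall i, cabs (x i 0) <= c * cabs (y i 0)) -> vnorm2 x <= c * vnorm2 y.
Proof.
move=> c0 xy; rewrite -[c]ger0_norm // -cabs_real -vnorm2Z.
by apply: vnorm2_le_entrywise => i; rewrite mxE cabsM cabs_real ger0_norm.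
Qed.

Lemma vnorm2_scale_ge x y (c : R) : 0 <= c ->
  (forall i, c * cabs (y i 0) <= cabs (x i 0)) -> c * vnorm2 y <= vnorm2 x.
Proof.
move=> c0 xy; rewrite -[c]ger0_norm // -cabs_real -vnorm2Z.
by apply: vnorm2_le_entrywise => i; rewrite mxE cabsM cabs_real ger0_norm.
Qed.

End VectorNorm.

Lemma cauchy_schwarz2 (R : rcfType) (u v a b : R) :
  u * a + v * b <= Num.sqrt (u ^+ 2 + v ^+ 2) * Num.sqrt (a ^+ 2 + b ^+ 2).
Proof.
rewrite -sqrtrM ?addr_ge0 ?sqr_ge0 //.
have [le0|gt0] := lerP (u * a + v * b) 0; first exact: le_trans le0 (sqrtr_ge0 _).
rewrite -(ger0_norm (ltW gt0)) -sqrtr_sqr ler_wsqrtr // -subr_ge0.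
have -> : (u ^+ 2 + v ^+ 2) * (a ^+ 2 + b ^+ 2) - (u * a + v * b) ^+ 2 = (u * b - v * a) ^+ 2.
  by ring.
exact: sqr_ge0.
Qed.

Section ConjugateTranspose.
Variable R : realType.
Local Notation C := R[i].

Lemma ctrmx_mul p q r (A : 'M[C]_(p, q)) (B : 'M[C]_(q, r)) :
  ctrmx (A *m B) = ctrmx B *m ctrmx A.
Proof. by rewrite /ctrmx trmx_mul map_mxM. Qed.

Lemma ctrmxK p q (A : 'M[C]_(p, q)) : ctrmx (ctrmx A) = A.
Proof. by apply/matrixP => i j; rewrite !mxE conjcK. Qed.

Lemma ctrmx_lsubmx p q r (A : 'M[C]_(p, q + r)) : ctrmx (lsubmx A) = usubmx (ctrmx A).
Proof. by rewrite /ctrmx trmx_lsub map_usubmx. Qed.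

Lemma ctrmx_rsubmx p q r (A : 'M[C]_(p, q + r)) : ctrmx (rsubmx A) = dsubmx (ctrmx A).
Proof. by rewrite /ctrmx trmx_rsub map_dsubmx. Qed.

Lemma unitary_ctrmx n (Q : 'M[C]_n) : ctrmx Q *m Q = 1%:M -> ctrmx (ctrmx Q) *m ctrmx Q = 1%:M.
Proof. by rewrite ctrmxK; apply: mulmx1C. Qed.

Lemma ctrmx_mulmx_vnorm2 n (x : 'cV[C]_n) : (ctrmx x *m x) 0 0 = ((vnorm2 x ^+ 2)%:C)%C.
Proof.
rewrite sqr_vnorm2 mxE rmorph_sum; apply: eq_bigr => i _.
rewrite !mxE; case: (x i 0) => a b; apply/eqP; rewrite eq_complex /=.
by apply/andP; split; apply/eqP; ring.
Qed.

Lemma vnorm2_isometry p q (Q : 'M[C]_(p, q)) (x : 'cV[C]_q) :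
  ctrmx Q *m Q = 1%:M -> vnorm2 (Q *m x) = vnorm2 x.
Proof.
move=> QQ; apply/eqP; rewrite -(@eqrXn2 _ 2) ?vnorm2_ge0 //.
rewrite -(inj_eq (@complexI R)) -!ctrmx_mulmx_vnorm2.
by rewrite ctrmx_mul mulmxA -(mulmxA (ctrmx x)) QQ mulmx1.
Qed.

Lemma sqr_vnorm2_col p q (x : 'cV[C]_(p + q)) :
  vnorm2 x ^+ 2 = vnorm2 (usubmx x) ^+ 2 + vnorm2 (dsubmx x) ^+ 2.
Proof.
rewrite !sqr_vnorm2 big_split_ord /=.
by congr (_ + _); apply: eq_bigr => i _; rewrite mxE.
Qed.

Lemma ctrmx_eigenbasis n (A Psi : 'M[C]_n) (lambda : 'I_n -> C) :
  ctrmx Psi *m Psi = 1%:M -> (forall j, A *m col j Psi = lambda j *: col j Psi) ->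
  ctrmx Psi *m A = diag_mx (\row_j lambda j) *m ctrmx Psi.
Proof.
move=> unitPsi eigA.
have APsi : A *m Psi = Psi *m diag_mx (\row_j lambda j).
  apply/matrixP => i j; have /matrixP/(_ i 0) := eigA j.
  by rewrite mul_mx_diag !mxE mulrC => <-; apply: eq_bigr => l _; rewrite !mxE.
rewrite -[ctrmx Psi *m A]mulmx1 -(mulmx1C unitPsi) !mulmxA -(mulmxA _ A) APsi.
by rewrite mulmxA unitPsi mul1mx.
Qed.

End ConjugateTranspose.

Section SpectralNorm.
Variable R : realType.
Local Notation C := R[i].

Lemma vnorm2_delta n : vnorm2 (delta_mx 0 0 : 'cV[C]_n.+1) = 1.
Proof.
apply/eqP; rewrite -(@eqrXn2 _ 2) ?vnorm2_ge0 // expr1n sqr_vnorm2_cabs (bigD1 0) //=.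
rewrite big1 => [|i /negPf i0]; last by rewrite mxE i0 mulr0n; apply/eqP; rewrite sqrf_eq0 cabs_eq0.
by rewrite mxE !eqxx mulr1n addr0 -(rmorph1 (real_complex R)) cabs_real normr1 expr1n.
Qed.

Lemma vnorm2_normalize n (x : 'cV[C]_n) : x != 0 -> vnorm2 ((vnorm2 x)^-1%:C%C *: x) = 1.
Proof.
move=> x0; rewrite vnorm2Z cabs_real ger0_norm ?invr_ge0 ?vnorm2_ge0 //.
by rewrite mulVf // gt_eqF ?vnorm2_gt0.
Qed.

Lemma vnorm2_mulmx_normalize p n (M : 'M[C]_(p, n)) (x : 'cV[C]_n) :
  vnorm2 (M *m ((vnorm2 x)^-1%:C%C *: x)) = vnorm2 (M *m x) / vnorm2 x.
Proof. by rewrite -scalemxAr vnorm2Z cabs_real ger0_norm ?invr_ge0 ?vnorm2_ge0 // mulrC. Qed.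

Lemma mulmx_col_sum p q (M : 'M[C]_(p, q)) (x : 'cV[C]_q) : M *m x = \sum_j x j 0 *: col j M.
Proof.
apply/matrixP => i k; rewrite ord1 !mxE summxE; apply: eq_bigr => j _.
by rewrite !mxE mulrC.
Qed.

Lemma vnorm2_sum n I (r : seq I) (P : pred I) (F : I -> 'cV[C]_n) :
  vnorm2 (\sum_(j <- r | P j) F j) <= \sum_(j <- r | P j) vnorm2 (F j).
Proof.
apply: (big_rec2 (fun a b => vnorm2 b <= a)); first by rewrite vnorm2_0.
by move=> j a b _ h; apply: le_trans (vnorm2D _ _) _; rewrite lerD2l.
Qed.

Lemma spec_norm_ub p q (M : 'M[C]_(p, q)) x : vnorm2 x = 1 -> vnorm2 (M *m x) <= spec_norm M.
Proof.
move=> x1; apply: ub_le_sup; last by exists x.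
exists (\sum_j vnorm2 (col j M)) => _ [y /= y1 <-].
rewrite mulmx_col_sum; apply: le_trans (vnorm2_sum _ _ _) _; apply: ler_sum => j _.
by rewrite vnorm2Z ler_piMl ?vnorm2_ge0 // -y1 vnorm2_entry.
Qed.

Lemma spec_norm_ge0 p q (M : 'M[C]_(p, q.+1)) : 0 <= spec_norm M.
Proof. exact: le_trans (vnorm2_ge0 _) (spec_norm_ub M (vnorm2_delta q)). Qed.

Lemma spec_norm_le p q (M : 'M[C]_(p, q.+1)) c :
  (forall x, vnorm2 x = 1 -> vnorm2 (M *m x) <= c) -> spec_norm M <= c.
Proof.
move=> Mc; apply: ge_sup => [|_ [x /= x1 <-]]; last exact: Mc.
by exists (vnorm2 (M *m delta_mx 0 0)), (delta_mx 0 0); rewrite //= vnorm2_delta.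
Qed.

Lemma sigma_min_lb n (M : 'M[C]_n) x : vnorm2 x = 1 -> sigma_min M <= vnorm2 (M *m x).
Proof.
move=> x1; apply: ge_inf; last by exists x.
by exists 0 => _ [y _ <-]; apply: vnorm2_ge0.
Qed.

Lemma sigma_min_le_spec_norm n (M : 'M[C]_n.+1) : sigma_min M <= spec_norm M.
Proof. exact: le_trans (sigma_min_lb M (vnorm2_delta n)) (spec_norm_ub M (vnorm2_delta n)). Qed.

Lemma spec_normP p q (M : 'M[C]_(p, q)) x : vnorm2 (M *m x) <= spec_norm M * vnorm2 x.
Proof.
have [->|x0] := eqVneq x 0; first by rewrite mulmx0 !vnorm2_0 mulr0.
have := spec_norm_ub M (vnorm2_normalize x0).
by rewrite vnorm2_mulmx_normalize ler_pdivrMr ?vnorm2_gt0.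
Qed.

Lemma sigma_minP n (M : 'M[C]_n) x : sigma_min M * vnorm2 x <= vnorm2 (M *m x).
Proof.
have [->|x0] := eqVneq x 0; first by rewrite mulmx0 !vnorm2_0 mulr0.
have := sigma_min_lb M (vnorm2_normalize x0).
by rewrite vnorm2_mulmx_normalize ler_pdivlMr ?vnorm2_gt0.
Qed.

Lemma spec_norm_isometry p q r (Q : 'M[C]_(p, q)) (M : 'M[C]_(q, r)) :
  ctrmx Q *m Q = 1%:M -> spec_norm (Q *m M) = spec_norm M.
Proof.
move=> QQ; rewrite /spec_norm; congr sup.
by apply: eq_imagel => x _; rewrite -mulmxA vnorm2_isometry.
Qed.

End SpectralNorm.

Section DominatedBlocks.
Variables (R : realType) (n q : nat).
Variables (W : 'M[R[i]]_n.+1) (U : 'M[R[i]]_(q, n.+1)) (t d : R).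
Hypothesis d_gt0 : 0 < d.
Hypothesis dominated : forall x, vnorm2 (U *m x) <= t * vnorm2 (W *m x) - d * vnorm2 x.

Lemma dominated_unitmx : W \in unitmx.
Proof.
have W_inj (x : 'cV_n.+1) : W *m x = 0 -> x = 0.
  move=> Wx0; apply/eqP; rewrite -(vnorm2_eq0 x) eq_le vnorm2_ge0 andbT -(pmulr_rle0 _ d_gt0).
  have := dominated x; rewrite Wx0 vnorm2_0 mulr0 sub0r -oppr_ge0.
  exact/le_trans/vnorm2_ge0.
rewrite -unitmx_tr unitmxE unitfE; apply/negP => /det0P [v v0 vWt].
have Wv : W *m v^T = 0 by rewrite -[W]trmxK -trmx_mul vWt trmx0.
by rewrite -(trmxK v) (W_inj _ Wv) trmx0 eqxx in v0.
Qed.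

Lemma dominated_spec_norm_lt : spec_norm (U *m invmx W) < t.
Proof.
have WK y : W *m (invmx W *m y) = y by rewrite mulmxA mulmxV ?dominated_unitmx // mul1mx.
have nW_gt0 : 0 < spec_norm W.
  have := spec_normP W (invmx W *m delta_mx 0 0); rewrite WK vnorm2_delta => h.
  rewrite lt_neqAle spec_norm_ge0 andbT; apply: contraTneq h => <-.
  by rewrite mul0r ler10.
apply: (@le_lt_trans _ _ (t - d / spec_norm W)); last by rewrite ltrBlDr ltrDl divr_gt0.
apply: spec_norm_le => y y1; rewrite -mulmxA.
have := dominated (invmx W *m y); rewrite WK y1 mulr1 => /le_trans; apply.
rewrite lerD2l lerN2 ler_pdivrMr // -mulrA ler_pMr //.
by have := spec_normP W (invmx W *m y); rewrite WK y1 mulrC.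
Qed.

End DominatedBlocks.

Section PerturbedBlocks.
Variables (R : realType) (n q : nat).
Local Notation C := R[i].
(* In the application X = Psi^* V Phi, F = Psi^* E and mu = lambda, so that
   D *m X + F = Psi^* V'. *)
Variables (mu : 'I_(n.+1 + q) -> C) (X F : 'M[C]_(n.+1 + q, n.+1)) (lm l' t eps : R).
Hypotheses (lm_gt0 : 0 < lm) (l'_ge0 : 0 <= l') (l'_le_lm : l' <= lm).
Hypotheses (t_ge0 : 0 <= t) (eps_ge0 : 0 <= eps).
Hypothesis mu_top : forall i, lm <= cabs (mu (lshift q i)).
Hypothesis mu_bot : forall i, cabs (mu (rshift n.+1 i)) <= l'.
Hypothesis tan_bound : forall x, vnorm2 (dsubmx X *m x) <= t * vnorm2 (usubmx X *m x).
Hypothesis F_bound : forall x, vnorm2 (F *m x) <= eps * vnorm2 x.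

Local Notation D := (diag_mx (\row_i mu i)).
Local Notation Y := (usubmx X).
Local Notation Z := (dsubmx X).
Local Notation X' := (D *m X + F).
Local Notation s := (Num.sqrt (t ^+ 2 + 1)).
Local Notation gap := (t * (lm - l') * sigma_min Y - s * eps).

Lemma usubmx_diag_ge (z : 'cV[C]_(n.+1 + q)) : lm * vnorm2 (usubmx z) <= vnorm2 (usubmx (D *m z)).
Proof.
apply: vnorm2_scale_ge (ltW lm_gt0) _ => i.
by rewrite mul_diag_mx !mxE cabsM ler_wpM2r ?cabs_ge0.
Qed.

Lemma dsubmx_diag_le (z : 'cV[C]_(n.+1 + q)) : vnorm2 (dsubmx (D *m z)) <= l' * vnorm2 (dsubmx z).
Proof.
apply: vnorm2_scale_le l'_ge0 _ => i.
by rewrite mul_diag_mx !mxE cabsM ler_wpM2r ?cabs_ge0.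
Qed.

Lemma split_error_le x :
  t * vnorm2 (usubmx (F *m x)) + vnorm2 (dsubmx (F *m x)) <= s * (eps * vnorm2 x).
Proof.
rewrite -[X in _ + X]mul1r; apply: le_trans (cauchy_schwarz2 _ _ _ _) _.
by rewrite expr1n ler_wpM2l ?sqrtr_ge0 // -sqr_vnorm2_col sqrtr_sqr ger0_norm ?vnorm2_ge0 ?F_bound.
Qed.

Lemma perturbed_blocks_dominated x :
  vnorm2 (dsubmx X' *m x) <= t * vnorm2 (usubmx X' *m x) - gap * vnorm2 x.
Proof.
have X'x : X' *m x = D *m (X *m x) + F *m x by rewrite mulmxDl mulmxA.
set a := vnorm2 (Y *m x); set b := vnorm2 (Z *m x).
set e1 := vnorm2 (usubmx (F *m x)); set e2 := vnorm2 (dsubmx (F *m x)).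
have top : lm * a - e1 <= vnorm2 (usubmx X' *m x).
  rewrite mul_usub_mx X'x linearD /= lerBlDr -[e1]vnorm2N.
  apply: le_trans (vnorm2D _ _); rewrite addrK /a mul_usub_mx.
  exact: usubmx_diag_ge.
have bot : vnorm2 (dsubmx X' *m x) <= l' * b + e2.
  rewrite mul_dsub_mx X'x linearD /=; apply: le_trans (vnorm2D _ _) _.
  by rewrite lerD2r /b mul_dsub_mx dsubmx_diag_le.
have sg_a : sigma_min Y * vnorm2 x <= a := sigma_minP Y x.
have err : t * e1 + e2 <= s * (eps * vnorm2 x) := split_error_le x.
have b_ta : l' * b <= l' * (t * a) by rewrite ler_wpM2l ?tan_bound.
have top_t : t * (lm * a - e1) <= t * vnorm2 (usubmx X' *m x) by rewrite ler_wpM2l.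
have sg_t : t * (lm - l') * (sigma_min Y * vnorm2 x) <= t * (lm - l') * a.
  by rewrite ler_wpM2l // mulr_ge0 // subr_ge0.
lra.
Qed.

Lemma dsubmx_spec_norm_le : spec_norm Z * s <= t * spec_norm X.
Proof.
have s_gt0 : 0 < s by rewrite sqrtr_gt0 ltr_wpDl ?sqr_ge0.
rewrite -ler_pdivlMr //; apply: spec_norm_le => x x1; rewrite ler_pdivlMr //.
apply: (@le_trans _ _ (t * vnorm2 (X *m x))); last by rewrite ler_wpM2l // spec_norm_ub.
rewrite -ler_sqr ?nnegrE ?mulr_ge0 ?vnorm2_ge0 ?sqrtr_ge0 //.
rewrite !exprMn [s ^+ 2]sqr_sqrtr ?addr_ge0 ?sqr_ge0 //.
rewrite sqr_vnorm2_col -!mul_usub_mx -!mul_dsub_mx.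
have : vnorm2 (Z *m x) ^+ 2 <= (t * vnorm2 (Y *m x)) ^+ 2.
  by rewrite ler_sqr ?nnegrE ?mulr_ge0 ?vnorm2_ge0 ?tan_bound.
rewrite exprMn; nra.
Qed.

Lemma gap_gt0 :
  eps / lm < ((kappa2 Y)^-1 - l' / lm) * (spec_norm Y * spec_norm Z / spec_norm X) ->
  0 < gap.
Proof.
rewrite /kappa2 invf_div.
set sg := sigma_min Y; set ny := spec_norm Y; set nz := spec_norm Z; set nx := spec_norm X.
move=> H; have lhs_ge0 : 0 <= eps / lm by rewrite divr_ge0 // ltW.
have ny_gt0 : 0 < ny.
  rewrite lt_neqAle spec_norm_ge0 andbT; apply: contraTneq H => <-.
  by rewrite !mul0r mulr0 -leNgt.
have nx_gt0 : 0 < nx.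
  rewrite lt_neqAle spec_norm_ge0 andbT; apply: contraTneq H => <-.
  by rewrite invr0 !mulr0 -leNgt.
set c := lm * sg - l' * ny.
have {}H : eps * nx < c * nz.
  move: H; rewrite -(ltr_pM2r (mulr_gt0 lm_gt0 nx_gt0)).
  have -> : eps / lm * (lm * nx) = eps * nx by field; rewrite gt_eqF.
  have -> // : (sg / ny - l' / lm) * (ny * nz / nx) * (lm * nx) = c * nz.
  by rewrite /c; field; rewrite (gt_eqF ny_gt0) (gt_eqF nx_gt0) (gt_eqF lm_gt0).
have c_gt0 : 0 < c.
  rewrite ltNge; apply: contraTN H => c_le0; rewrite -leNgt.
  exact: le_trans (mulr_le0_ge0 c_le0 (spec_norm_ge0 _)) (mulr_ge0 eps_ge0 (ltW nx_gt0)).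
have s_gt0 : 0 < s by rewrite sqrtr_gt0 ltr_wpDl ?sqr_ge0.
have s_eps : s * eps < c * t.
  rewrite -(ltr_pM2r nx_gt0); apply: (@lt_le_trans _ _ (s * (c * nz))).
    by rewrite -mulrA ltr_pM2l.
  by rewrite mulrCA -!mulrA ler_wpM2l ?(ltW c_gt0) // [s * _]mulrC dsubmx_spec_norm_le.
have c_le : c <= (lm - l') * sg.
  by rewrite /c mulrBl lerD2l lerN2 ler_wpM2l // sigma_min_le_spec_norm.
have := ler_wpM2l t_ge0 c_le; lra.
Qed.

Lemma perturbed_tan_lt :
  eps / lm < ((kappa2 Y)^-1 - l' / lm) * (spec_norm Y * spec_norm Z / spec_norm X) ->
  usubmx X' \in unitmx /\ spec_norm (dsubmx X' *m invmx (usubmx X')) < t.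
Proof.
move=> /gap_gt0 gap_gt0; split.
  exact: dominated_unitmx gap_gt0 perturbed_blocks_dominated.
exact: dominated_spec_norm_lt gap_gt0 perturbed_blocks_dominated.
Qed.

End PerturbedBlocks.

Theorem theorem4 (R : realType) (m k : nat)
  (A Psi : 'M[R[i]]_(m.+1 + k.+1)) (lambda : 'I_(m.+1 + k.+1) -> R[i])
  (V : 'M[R[i]]_(m.+1 + k.+1, m.+1)) (Phi : 'M[R[i]]_m.+1)
  (E : 'M[R[i]]_(m.+1 + k.+1, m.+1)) :
  (* columns of Psi form an orthonormal basis ... *)
  ctrmx Psi *m Psi = 1%:M ->
  (* ... of eigenvectors of A with eigenvalues lambda *)
  (forall j, A *m col j Psi = lambda j *: col j Psi) ->
  (* |lambda_1| >= ... >= |lambda_N| *)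
  (forall i j : 'I_(m.+1 + k.+1), (i <= j)%N -> cabs (lambda j) <= cabs (lambda i)) ->
  (* lambda_m <> 0 *)
  lambda (lshift k.+1 (@ord_max m)) != 0 ->
  ctrmx (lsubmx Psi) *m V \in unitmx ->
  Phi \in unitmx ->
  let lam_m := lambda (lshift k.+1 (@ord_max m)) in
  let lam_m1 := lambda (rshift m.+1 (@ord0 k)) in
  let VPhi := V *m Phi in
  let Vp := A *m V *m Phi + E in
  spec_norm E / cabs lam_m <
    ((kappa2 (ctrmx (lsubmx Psi) *m VPhi))^-1 - cabs (lam_m1 / lam_m)) *
    (spec_norm (ctrmx (lsubmx Psi) *m VPhi) * spec_norm (ctrmx (rsubmx Psi) *m VPhi)
     / spec_norm VPhi) ->
  max_angle Psi Vp < max_angle Psi V.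
Proof.
move=> unitPsi eigA sorted_lambda lam_m_neq0 unitV _ lam_m lam_m1 VPhi Vp H.
set P := ctrmx Psi; have unitP : ctrmx P *m P = 1%:M := unitary_ctrmx unitPsi.
rewrite /max_angle /= !ctrmx_lsubmx !ctrmx_rsubmx -/P in unitV H *.
rewrite !(mul_usub_mx P) !(mul_dsub_mx P) in unitV H *.
set G := dsubmx (P *m V) *m invmx (usubmx (P *m V)).
have ZY : dsubmx (P *m VPhi) = G *m usubmx (P *m VPhi).
  by rewrite /G /VPhi mulmxA -(mul_usub_mx (P *m V)) -(mul_dsub_mx (P *m V)) -mulmxA mulKmx.
have tan_V x : vnorm2 (dsubmx (P *m VPhi) *m x) <= spec_norm G * vnorm2 (usubmx (P *m VPhi) *m x).
  by rewrite ZY -mulmxA spec_normP.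
have PVp : P *m Vp = diag_mx (\row_j lambda j) *m (P *m VPhi) + P *m E.
  by rewrite mulmxDr !mulmxA (ctrmx_eigenbasis unitPsi eigA).
rewrite -(spec_norm_isometry VPhi unitP) cabs_div in H.
rewrite unitV PVp.
have lam_m_gt0 : 0 < cabs lam_m := cabs_gt0 lam_m_neq0.
have gap_m : cabs lam_m1 <= cabs lam_m by apply: sorted_lambda; rewrite /= addn0.
have top i : cabs lam_m <= cabs (lambda (lshift k.+1 i)).
  by apply: sorted_lambda; rewrite /= leq_ord.
have bot i : cabs (lambda (rshift m.+1 i)) <= cabs lam_m1.
  by apply: sorted_lambda; rewrite /= leq_add2l.
have E_bound x : vnorm2 (P *m E *m x) <= spec_norm E * vnorm2 x.
  by rewrite -mulmxA vnorm2_isometry ?spec_normP.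
have [unitW tan_lt] := perturbed_tan_lt lam_m_gt0 (cabs_ge0 _) gap_m (spec_norm_ge0 _)
  (spec_norm_ge0 _) top bot tan_V E_bound H.
by rewrite unitW; apply: lt_atan.
Qed.
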